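(* Let $X$ be a non-empty set, $(Y,\langle\cdot,\cdot\rangle)$ a real inner product space, and let $I:X\to\mathbb{R}$, $\Phi:X\to Y$ and $\mu>0$ be such that the function $x\mapsto I(x)+\mu\|\Phi(x)\|^2$ has a global minimum in $X$. Then at least one of the following assertions holds: (a) for each filtering cover $\mathcal{N}$ of $X$ there exists $A\in\mathcal{N}$ such that $$\sup_{\lambda\in Y}\inf_{x\in A}\big(I(x)+\mu(2\langle\Phi(x),\lambda\rangle-\|\lambda\|^2)\big)<\inf_{x\in A}\sup_{\lambda\in\Phi(A)}\big(I(x)+\mu(2\langle\Phi(x),\lambda\rangle-\|\lambda\|^2)\big);$$ (b) for each global minimum $u$ of $x\mapsto I(x)+\mu\|\Phi(x)\|^2$ one has $$I(u)\leq I(x)+2\mu\big(\langle\Phi(x),\Phi(u)\rangle-\|\Phi(u)\|^2\big)$$ for all $x\in X$.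
   Context: A family $\mathcal{N}$ of non-empty subsets of $X$ is a filtering cover of $X$ if $\bigcup_{A\in\mathcal{N}}A=X$ and for each $A_1,A_2\in\mathcal{N}$ there is $A_3\in\mathcal{N}$ with $A_1\cup A_2\subseteq A_3$. *)

From HB Require Import structures.
From mathcomp Require Import all_boot all_order all_algebra.
From mathcomp Require Import all_classical all_reals ereal.
Set Implicit Arguments. Unset Strict Implicit. Unset Printing Implicit Defensive.
Import Order.TTheory GRing.Theory Num.Theory.
Local Open Scope classical_set_scope.
Local Open Scope ring_scope.

Definition is_inner_product (R : realType) (Y : lmodType R)
    (ip : Y -> Y -> R) : Prop :=
  [/\ (forall x y, ip x y = ip y x),
      (forall a x y z, ip (a *: x + y) z = a * ip x z + ip y z),
      (forall x, 0 <= ip x x) &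
      (forall x, ip x x = 0 -> x = 0)].

Definition ipnorm (R : realType) (Y : lmodType R) (ip : Y -> Y -> R) (y : Y) : R :=
  Num.sqrt (ip y y).

Definition filtering_cover (X : Type) (N : set (set X)) : Prop :=
  [/\ (forall A, N A -> A !=set0),
      \bigcup_(A in N) A = setT &
      (forall A1 A2, N A1 -> N A2 -> exists2 A3, N A3 & A1 `|` A2 `<=` A3)].

Definition is_global_min (X : Type) (R : realType) (J : X -> R) (u : X) : Prop :=
  forall x, J u <= J x.

From HB Require Import structures.
From mathcomp Require Import all_boot all_order all_algebra.
From mathcomp Require Import all_classical all_reals ereal.
From mathcomp Require Import ring lra.
Set Implicit Arguments. Unset Strict Implicit. Unset Printing Implicit Defensive.
Import Order.TTheory GRing.Theory Num.Theory.
Local Open Scope classical_set_scope.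
Local Open Scope ring_scope.

(* Write J x = I x + mu ||Phi x||^2 and L(x, l) = I x + mu (2 <Phi x, l> - ||l||^2),
   so that L(x, l) = J x - mu ||l - Phi x||^2.  Assertion (b) says exactly
   J u <= L(x, Phi u).  If (a) fails, some filtering cover N satisfies the
   minimax inequality on every member; taking A in N containing a minimum u of J
   and an arbitrary x gives J u <= inf_A J <= sup_l inf_A L, hence for every
   e > 0 a common l with L(u, l) and L(x, l) above J u - e.  The first bound
   forces l close to Phi u, and since l |-> L(x, l) is upper semicontinuous the
   second one passes to the limit, giving J u <= L(x, Phi u). *)

Section InnerProduct.
Variables (R : realType) (Y : lmodType R) (ip : Y -> Y -> R).
Hypothesis ipH : is_inner_product ip.

Lemma ipC x y : ip x y = ip y x.
Proof. by case: ipH. Qed.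

Lemma ipDl x y z : ip (x + y) z = ip x z + ip y z.
Proof. by case: ipH => _ ipL _ _; rewrite -[x in LHS]scale1r ipL mul1r. Qed.

Lemma ip0l z : ip 0 z = 0.
Proof. by apply: (@addrI _ (ip 0 z)); rewrite -ipDl !addr0. Qed.

Lemma ipZl a x z : ip (a *: x) z = a * ip x z.
Proof. by case: ipH => _ ipL _ _; rewrite -[a *: x]addr0 ipL ip0l addr0. Qed.

Lemma ipBl x y z : ip (x - y) z = ip x z - ip y z.
Proof. by rewrite ipDl -scaleN1r ipZl mulN1r. Qed.

Lemma ipBr x y z : ip z (x - y) = ip z x - ip z y.
Proof. by rewrite ipC ipBl !(ipC z). Qed.

Lemma ipZr a x z : ip z (a *: x) = a * ip z x.
Proof. by rewrite ipC ipZl ipC. Qed.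

Lemma ip_ge0 x : 0 <= ip x x.
Proof. by case: ipH. Qed.

Lemma ipnorm_sqr y : ipnorm ip y ^+ 2 = ip y y.
Proof. by rewrite sqr_sqrtr // ip_ge0. Qed.

Lemma ip_normB x y : ip (x - y) (x - y) = ip x x - 2 * ip x y + ip y y.
Proof. by rewrite !ipBl !ipBr (ipC y x); ring. Qed.

Lemma ip_normBC x y : ip (x - y) (x - y) = ip (y - x) (y - x).
Proof. by rewrite !ip_normB (ipC y x); ring. Qed.

Lemma ip_AMGM t x y : 2 * t * ip x y <= t ^+ 2 * ip x x + ip y y.
Proof.
rewrite -subr_ge0.
have -> : t ^+ 2 * ip x x + ip y y - 2 * t * ip x y = ip (t *: x - y) (t *: x - y).
  by rewrite ip_normB !ipZl ipZr; ring.
exact: ip_ge0.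
Qed.

End InnerProduct.

Lemma le_of_forall_lt_addM (R : realFieldType) (b c K : R) :
  (forall e, 0 < e -> e <= 1 -> c < b + e * K) -> c <= b.
Proof.
move=> lt_c; apply/ler_addgt0Pr => r r0.
have K1 : 0 < `|K| + 1 by have := normr_ge0 K; lra.
set e := Num.min 1 (r / (`|K| + 1)).
have e0 : 0 < e by rewrite lt_min ltr01 divr_gt0.
have e1 : e <= 1 by rewrite ge_min lexx.
have eK : e * K <= r.
  have : e * (`|K| + 1) <= r by rewrite -ler_pdivlMr // ge_min lexx orbT.
  have : e * K <= e * `|K| by apply: ler_wpM2l; [exact: ltW | exact: ler_norm].
  nra.
by apply: ltW; apply: lt_le_trans (lt_c e e0 e1) _; lra.
Qed.

Lemma ereal_sup_inf_gtP (R : realType) (T L : Type) (f : T -> L -> R)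
    (A : set T) (B : set L) (c c' : R) :
  (c%:E <= ereal_sup [set ereal_inf [set (f x l)%:E | x in A] | l in B])%E ->
  c' < c -> exists2 l, B l & forall x, A x -> c' < f x l.
Proof.
move=> le_c lt_c'.
have /ereal_sup_gt[_ [l Bl <-] lt_inf] : (c'%:E < ereal_sup
    [set ereal_inf [set (f x l)%:E | x in A] | l in B])%E.
  by apply: lt_le_trans le_c; rewrite lte_fin.
exists l => // x Ax; rewrite -lte_fin.
by apply: lt_le_trans lt_inf _; apply: ereal_inf_lbound; exists x.
Qed.

Lemma filtering_cover_common (X : Type) (N : set (set X)) (u v : X) :
  filtering_cover N -> exists2 A, N A & A u /\ A v.
Proof.
case=> _ cov up.
have [Au NAu Auu] : (\bigcup_(A in N) A) u by rewrite cov.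
have [Av NAv Avv] : (\bigcup_(A in N) A) v by rewrite cov.
have [A NA sA] := up _ _ NAu NAv.
by exists A => //; split; apply: sA; [left | right].
Qed.

Section Lagrangian.
Variables (R : realType) (X : Type) (Y : lmodType R) (ip : Y -> Y -> R).
Variables (I : X -> R) (Phi : X -> Y) (mu : R).
Hypothesis ipH : is_inner_product ip.

Definition penalized x := I x + mu * ipnorm ip (Phi x) ^+ 2.

Definition lagrangian x l := I x + mu * (2 * ip (Phi x) l - ipnorm ip l ^+ 2).

Lemma lagrangianE x l :
  lagrangian x l = penalized x - mu * ip (l - Phi x) (l - Phi x).
Proof.
by rewrite /lagrangian /penalized !ipnorm_sqr // ip_normB // (ipC ipH l); ring.
Qed.

Lemma lagrangian_diag x : lagrangian x (Phi x) = penalized x.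
Proof. by rewrite lagrangianE subrr ip0l // mulr0 subr0. Qed.

Lemma lagrangian_shift x q l : lagrangian x l =
  lagrangian x q + mu * (2 * ip (l - q) (Phi x - q) - ip (l - q) (l - q)).
Proof.
rewrite !lagrangianE.
have -> : l - Phi x = (l - q) - (Phi x - q) by rewrite opprB addrA subrK.
by rewrite ip_normB // (ip_normBC ipH q); ring.
Qed.

Lemma penalized_le_inf_sup (A : set X) u : is_global_min penalized u -> A u ->
  ((penalized u)%:E <=
   ereal_inf [set ereal_sup [set (lagrangian y l)%:E | l in Phi @` A] | y in A])%E.
Proof.
move=> umin Au; apply/ereal_infP => _ [y Ay <-].
apply: (@le_trans _ _ (penalized y)%:E); first by rewrite lee_fin.
by apply: ereal_sup_ubound; exists (Phi y); [exists y | rewrite lagrangian_diag].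
Qed.

Lemma penalized_le_lagrangian u x : 0 < mu ->
  (forall e, 0 < e -> exists l,
     penalized u - e < lagrangian u l /\ penalized u - e < lagrangian x l) ->
  penalized u <= lagrangian x (Phi u).
Proof.
move=> mu0 near_l.
set a := Phi x - Phi u; set V := ip a a.
apply: (@le_of_forall_lt_addM _ _ _ (mu * V + 2)) => e e0 e1.
(* At level e^2 the witness l satisfies sqrt mu ||l - Phi u|| < e, which the
   AM-GM weight e in ip_AMGM balances. *)
have [l [lt_u lt_x]] := near_l _ (exprn_gt0 2 e0).
set d := l - Phi u; set D := ip d d.
have l_near : mu * D < e ^+ 2 by move: lt_u; rewrite lagrangianE -/d -/D; lra.
move: lt_x; rewrite (lagrangian_shift x (Phi u)) -/d -/a -/D (ipC ipH d a) => lt_x.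
have amgm := ip_AMGM ipH e a d; rewrite -/V -/D in amgm.
have D0 : 0 <= D by exact: ip_ge0.
have V0 : 0 <= V by exact: ip_ge0.
set b := lagrangian x (Phi u) in lt_x *; set c := penalized u in lt_x *.
suff : e * (c - (b + e * (mu * V + 2))) < 0 by rewrite pmulr_rlt0 // subr_lt0.
have lt_xe : e * (c - e ^+ 2) < e * (b + mu * (2 * ip a d - D)) by rewrite ltr_pM2l.
have amgm_mu : mu * (2 * e * ip a d) <= mu * (e ^+ 2 * V + D) by rewrite ler_pM2l.
have near_e : (1 - e) * (mu * D) <= (1 - e) * e ^+ 2.
  by apply: ler_wpM2l; [rewrite subr_ge0 | exact: ltW].
nra.
Qed.

End Lagrangian.

Theorem theorem3p4 (R : realType) (X : Type) (Y : lmodType R)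
  (ip : Y -> Y -> R) (I : X -> R) (Phi : X -> Y) (mu : R) :
  inhabited X ->
  is_inner_product ip ->
  0 < mu ->
  (exists u, is_global_min (fun x => I x + mu * ipnorm ip (Phi x) ^+ 2) u) ->
  (forall N : set (set X), filtering_cover N ->
     exists2 A, N A &
       (ereal_sup [set ereal_inf
            [set (I x + mu * (2 * ip (Phi x) l - ipnorm ip l ^+ 2))%:E | x in A]
          | l in [set: Y]]
        < ereal_inf [set ereal_sup
            [set (I x + mu * (2 * ip (Phi x) l - ipnorm ip l ^+ 2))%:E | l in Phi @` A]
          | x in A])%E)
  \/
  (forall u, is_global_min (fun x => I x + mu * ipnorm ip (Phi x) ^+ 2) u ->
     forall x, I u <= I x + 2 * mu * (ip (Phi x) (Phi u) - ipnorm ip (Phi u) ^+ 2)).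
Proof.
move=> _ ipH mu0 _.
apply: contrapT => /not_orP[/existsNP[N /not_implyP[Ncov not_a]]]; apply.
pose L := lagrangian ip I Phi mu.
have minimax A : N A ->
    (ereal_inf [set ereal_sup [set (L y l)%:E | l in Phi @` A] | y in A] <=
     ereal_sup [set ereal_inf [set (L y l)%:E | y in A] | l in [set: Y]])%E.
  by move=> NA; rewrite leNgt; apply/negP => lt; apply: not_a; exists A.
move=> u umin x.
have [A NA [Au Ax]] := filtering_cover_common u x Ncov.
have le_sup := le_trans (penalized_le_inf_sup ipH umin Au) (minimax A NA).
have : penalized ip I Phi mu u <= L x (Phi u).
  apply: (penalized_le_lagrangian ipH mu0) => e e0.
  have lt_e : penalized ip I Phi mu u - e < penalized ip I Phi mu u by lra.
  have [l _ lt_l] := ereal_sup_inf_gtP le_sup lt_e.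
  by exists l; split; apply: lt_l.
by rewrite /L /lagrangian /penalized !ipnorm_sqr //; lra.
Qed.
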